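(* Let $n$, $k$, $t$ be positive integers with $k\geq t+1$ and $n\geq 2k$, and let $V$ be an $n$-dimensional vector space over $\mathbb{F}_q$. Suppose $\mathcal{F}\subseteq{V\brack k}$ is a maximal (with respect to inclusion) almost $t$-intersecting family with $\tau_t(\mathcal{F})\leq k$. If $\mathcal{T}$ is the set of all $t$-covers of $\mathcal{F}$ of dimension $\tau_t(\mathcal{F})$, then $\mathcal{T}$ is $t$-intersecting, i.e. $\dim(T_1\cap T_2)\geq t$ for all $T_1,T_2\in\mathcal{T}$.
   Context: $q$ is a prime power; ${W\brack k}$ is the set of $k$-dimensional subspaces of $W$. A family $\mathcal{F}\subseteq{V\brack k}$ is almost $t$-intersecting if for each $F\in\mathcal{F}$ there is at most one $F'\in\mathcal{F}$ with $\dim(F\cap F')<t$. A subspace $W$ is a $t$-cover of $\mathcal{F}$ if $\dim(W\cap F)\geq t$ for all $F\in\mathcal{F}$; $\tau_t(\mathcal{F})$ is the minimum dimension of a $t$-cover of $\mathcal{F}$. *)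

(* V is a finite-dimensional vector space (vectType) over a
   finite field F (so |F| = q is a prime power); subspaces are {vspace V}. *)
From HB Require Import structures.
From mathcomp Require Import all_boot all_algebra.
Set Implicit Arguments. Unset Strict Implicit. Unset Printing Implicit Defensive.
Import GRing.Theory.
Local Open Scope vspace_scope.

Definition vfamily (F : fieldType) (V : vectType F) := {vspace V} -> Prop.

Definition k_family (F : fieldType) (V : vectType F) (k : nat) (Fm : vfamily V) :=
  forall U, Fm U -> \dim U = k.

(* almost t-intersecting: for each A in Fm there is at most one B in Fm
   with dim (A :&: B) < t. *)
Definition almost_t_intersecting (F : fieldType) (V : vectType F) (t : nat)
  (Fm : vfamily V) :=
  forall A B C, Fm A -> Fm B -> Fm C ->
    (\dim (A :&: B) < t)%N -> (\dim (A :&: C) < t)%N -> B = C.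

Definition t_cover (F : fieldType) (V : vectType F) (t : nat) (Fm : vfamily V)
  (W : {vspace V}) :=
  forall A, Fm A -> (t <= \dim (W :&: A))%N.

Definition is_tau (F : fieldType) (V : vectType F) (t : nat) (Fm : vfamily V)
  (m : nat) :=
  (exists W, t_cover t Fm W /\ \dim W = m) /\
  (forall W, t_cover t Fm W -> (m <= \dim W)%N).

Definition maximal_almost_t_intersecting (F : fieldType) (V : vectType F)
  (k t : nat) (Fm : vfamily V) :=
  k_family k Fm /\ almost_t_intersecting t Fm /\
  (forall G : vfamily V, k_family k G -> almost_t_intersecting t G ->
     (forall U, Fm U -> G U) -> forall U, G U -> Fm U).

(* Suppose two minimum t-covers T1, T2 meet in dimension < t. Since
   n >= 2k, there is room outside T1 + T2 to enlarge T1 to a k-space U with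
   U :&: T2 = T1 :&: T2. As U contains T1, it is a t-cover, so adding U to the
   family keeps it almost t-intersecting; by maximality U already lies in the
   family. But then the t-cover T2 meets U, hence T1, in dimension >= t. *)
From HB Require Import structures.
From mathcomp Require Import all_boot all_algebra.
From mathcomp Require Import zify.

Set Implicit Arguments.
Unset Strict Implicit.
Unset Printing Implicit Defensive.
Local Open Scope vspace_scope.

Section SubspaceExtension.

Variables (K : fieldType) (vT : vectType K).
Implicit Types (A B S U W : {vspace vT}).

Lemma exists_subv_dim U d :
  (d <= \dim U)%N -> exists2 W, (W <= U) & \dim W = d.
Proof.
move=> le_dU; set X := take d (vbasis U).
have sizeX : size X = d by rewrite size_takel // size_tuple.
have freeX : free X.
  apply: (@catl_free _ _ (drop d (vbasis U))).
  by rewrite cat_take_drop; apply: basis_free (vbasisP U).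
exists <<X>>; last by rewrite -sizeX; apply/eqP.
apply/span_subvP => x /mem_take Ux.
by rewrite -(span_basis (vbasisP U)); apply: memv_span.
Qed.

Lemma subv_cap_addv_disjoint A B S W :
  (A <= S) -> (B <= S) -> S :&: W = 0 -> (A + W) :&: B <= A :&: B.
Proof.
move=> sAS sBS SW0; apply/subvP => x /memv_capP [/memv_addP [a Aa [w Ww ->]] Bx].
have Sw : w \in S.
  rewrite -(GRing.addKr a w) GRing.addrC.
  by apply: memvB; [apply: (subvP sBS) | apply: (subvP sAS)].
have w0 : w = 0%R by apply/eqP; rewrite -memv0 -SW0 memv_cap Sw.
by move: Bx; rewrite w0 GRing.addr0 => Ba; rewrite memv_cap Aa.
Qed.

(* The complement of A + B supplies the d new dimensions without touching B. *)
Lemma extend_subv_cap_fixed A B d :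
  (\dim (A + B) + d <= \dim {:vT})%N ->
  exists U, [/\ A <= U, \dim U = (\dim A + d)%N & U :&: B <= A :&: B].
Proof.
move=> le_d; have [W sWC dimW] : exists2 W, W <= (A + B)^C & \dim W = d.
  by apply: exists_subv_dim; rewrite dimv_compl; lia.
have ABW0 : (A + B) :&: W = 0.
  by apply/eqP; rewrite -subv0 -(capv_compl (A + B)) capvS.
have AW0 : A :&: W = 0.
  by apply/eqP; rewrite -subv0 -ABW0 capvS ?addvSl.
exists (A + W); split; first exact: addvSl.
- by rewrite dimv_disjoint_sum // dimW.
- exact: subv_cap_addv_disjoint (addvSl A B) (addvSr A B) ABW0.
Qed.

End SubspaceExtension.

Section MaximalFamilies.

Variables (K : fieldType) (vT : vectType K) (k t : nat) (Fm : vfamily vT).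

Lemma t_coverS W1 W2 : (W1 <= W2)%VS -> t_cover t Fm W1 -> t_cover t Fm W2.
Proof.
move=> sW12 covW1 A FmA; apply: leq_trans (covW1 A FmA) _.
by apply: dimvS; rewrite capvS.
Qed.

(* A t-cover of Fm is at distance >= t from every member, so it can be adjoined
   to Fm without creating new pairs of intersection dimension < t. *)
Lemma maximal_family_mem_cover U :
  maximal_almost_t_intersecting k t Fm -> (t <= k)%N ->
  \dim U = k -> t_cover t Fm U -> Fm U.
Proof.
move=> [kFm [almostFm maxFm]] le_tk dimU covU.
pose G X := Fm X \/ X = U.
have kG : k_family k G by move=> X [/kFm | ->].
have covU_G X : G X -> (t <= \dim (U :&: X))%N.
  by case=> [/covU // | ->]; rewrite capvv dimU.
have almostG : almost_t_intersecting t G.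
  move=> A B C [FmA | ->] GB GC ltAB ltAC; last by have := covU_G B GB; lia.
  case: GB ltAB => [FmB | ->] ltAB; last by rewrite capvC in ltAB; have := covU A FmA; lia.
  case: GC ltAC => [FmC | ->] ltAC; last by rewrite capvC in ltAC; have := covU A FmA; lia.
  exact: almostFm ltAB ltAC.
by apply: (maxFm G kG almostG) => [X FmX | ]; [left | right].
Qed.

End MaximalFamilies.

Theorem lemma5p2 (F : finFieldType) (V : vectType F) (n k t : nat)
  (Fm : vfamily V) (m : nat) :
  (0 < t)%N -> (t.+1 <= k)%N -> (2 * k <= n)%N -> \dim {: V} = n ->
  maximal_almost_t_intersecting k t Fm ->
  is_tau t Fm m -> (m <= k)%N ->
  forall T1 T2 : {vspace V},
    t_cover t Fm T1 -> \dim T1 = m ->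
    t_cover t Fm T2 -> \dim T2 = m ->
    (t <= \dim (T1 :&: T2))%N.
Proof.
move=> _ lt_tk le_2kn dimV maxFm _ le_mk T1 T2 cov1 dim1 cov2 dim2.
rewrite leqNgt; apply/negP => lt12.
have le_sum : (\dim (T1 + T2) + (k - m) <= \dim {:V})%N.
  by have := dimv_sum_cap T1 T2; rewrite dim1 dim2 dimV; lia.
have [U [sT1U dimU capU]] := extend_subv_cap_fixed le_sum.
have FmU : Fm U.
  apply: maximal_family_mem_cover maxFm _ _ (t_coverS sT1U cov1); lia.
by have := cov2 U FmU; rewrite capvC; have := dimvS capU; lia.
Qed.
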